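(* Fix $1<p<\infty$. Fix natural numbers $l_1,\dots,l_{d+1}$, let $L=\prod_{i=1}^{d+1}l_i$ and let $T=\bigcup_{i=0}^{d+1}\Lambda_i$ be an $(l_1,\dots,l_{d+1})$ interval tree. Suppose $0<\Delta,\nu<1$, $\lambda>0$, $\Theta>0$, $M>1$, and $(r_I)_{I\in T},(s_I)_{I\in T}\subset[0,\infty)$ are such that (i) for each $I\in T$, $r_I\le\lambda s_I$; (ii) for each $I\in T\setminus\Lambda_{d+1}$, $r_I\le\sum_{J^-=I}r_J$ and $s_I\le\sum_{J^-=I}s_J$; (iii) for all $0\le j\le d$, $\max_{I\in\Lambda_j}s_I\le M\min_{I\in\Lambda_j}s_I$; (iv) $\Delta M^p\le\nu\Theta^p/(2\lambda^p)$; (v) $r_{[L]}^p>(1-\nu/2)\Theta^p\bigl(\prod_{i=1}^{d+1}l_i^{p-1}\bigr)\sum_{I\in\Lambda_{d+1}}s_I^p$. Then for any $0\le j<d$, $\bigl|\{I\in\Lambda_j: r_I^p\le(1-\nu)l_{j+1}^{p-1}\Theta^p\sum_{J^-=I}s_J^p\}\bigr|<(1-\Delta)|\Lambda_j|$.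
   Context: $[n]=\{1,\dots,n\}$. Given natural numbers $l_1,\dots,l_{k}$ with $L=\prod_{j=1}^{k}l_j$, an $(l_1,\dots,l_k)$ interval tree $T=\bigcup_{i=0}^k\Lambda_i$ is built as follows: $\Lambda_0=\{[L]\}$; if $\Lambda_i$ ($i<k$) consists of pairwise disjoint integer subintervals of $[L]$ each of cardinality $\prod_{j=i+1}^k l_j$, then each $I\in\Lambda_i$ is partitioned into $l_{i+1}$ integer subintervals of equal cardinality, and $\Lambda_{i+1}$ is the set of all these subintervals over all $I\in\Lambda_i$. For $0<j\le k$ and $J\in\Lambda_j$, $J^-$ denotes the unique $I\in\Lambda_{j-1}$ with $J\subset I$; sums $\sum_{J^-=I}$ range over the children of $I$. *)

From HB Require Import structures.
From mathcomp Require Import all_boot all_order all_algebra.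
From mathcomp Require Import all_classical all_reals all_analysis.
Set Implicit Arguments. Unset Strict Implicit. Unset Printing Implicit Defensive.
Import Order.TTheory GRing.Theory Num.Theory.

(* An integer interval {a, a+1, ..., b} (a <= b) is represented by the pair (a, b). *)
Definition nat_interval := (nat * nat)%type.

Definition split_interval (I : nat_interval) (m : nat) : seq nat_interval :=
  let c := (I.2 - I.1).+1 %/ m in
  [seq (I.1 + t * c, I.1 + t.+1 * c - 1) | t <- iota 0 m].

Definition Ltot (l : nat -> nat) (k : nat) : nat := \prod_(1 <= i < k.+1) l i.

Fixpoint Lambda (l : nat -> nat) (k : nat) (j : nat) : seq nat_interval :=
  match j with
  | 0 => [:: (1, Ltot l k)]
  | j'.+1 => flatten [seq split_interval K (l j) | K <- Lambda l k j']
  end.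

Definition subint (J I : nat_interval) : bool := (I.1 <= J.1) && (J.2 <= I.2).

(* children of the node I in Lambda_j: the J in Lambda_{j+1} with J^- = I,
   i.e. J \subset I. *)
Definition children (l : nat -> nat) (k : nat) (j : nat) (I : nat_interval) : seq nat_interval :=
  [seq J <- Lambda l k j.+1 | subint J I].

From mathcomp Require Import all_boot all_order all_algebra.
From mathcomp Require Import all_classical all_reals all_analysis.
From mathcomp Require Import zify ring lra.
Import Order.TTheory GRing.Theory Num.Theory.

(* If a (1 - Delta)-fraction of the level-j nodes were deficient, the level-j
   sum of r^p would be at most (1 - nu/2) Theta^p l_{j+1}^{p-1} times the
   level-(j+1) sum of s^p: the deficient nodes contribute at most (1 - nu) of
   this by definition, and the remaining Delta-fraction at most nu/2 of it,
   because r_I^p <= lambda^p s_I^p <= (lambda M)^p times the mean of s^p over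
   the level (by (iii)), and (iv) bounds Delta (lambda M)^p.  Superadditivity
   (ii) and the power-mean inequality (sum_{i<n} x_i)^p <= n^{p-1} sum x_i^p
   carry sums of p-th powers down the tree at the cost of a factor l_i^{p-1}
   per level, so r_[L]^p would be at most the left-hand side of (v). *)

Lemma flatten_iota_blocks m n :
  flatten [seq iota (t * m) m | t <- iota 0 n] = iota 0 (n * m).
Proof.
elim: n => [//|n IHn].
by rewrite -[n.+1]addn1 iotaD map_cat flatten_cat IHn /= cats0 add0n mulnDl mul1n iotaD.
Qed.

Lemma filter_iota_window a m n : a + m <= n ->
  [seq x <- iota 0 n | a <= x < a + m] = iota a m.
Proof.
move=> amn; rewrite -(subnKC amn) -addnA !iotaD !filter_cat.
rewrite (@eq_in_filter _ _ pred0) => [|x]; last by rewrite mem_iota /=; lia.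
rewrite filter_pred0 (@eq_in_filter _ _ predT) => [|x]; last by rewrite mem_iota /=; lia.
rewrite filter_predT (@eq_in_filter _ _ pred0) => [|x]; last by rewrite mem_iota /=; lia.
by rewrite filter_pred0 cats0.
Qed.

Lemma split_interval_block t m c : 0 < m -> 0 < c ->
  split_interval (1 + t * (m * c), t.+1 * (m * c)) m =
  [seq (1 + x * c, x.+1 * c) | x <- iota (t * m) m].
Proof.
move=> m_gt0 c_gt0; rewrite /split_interval /=.
have -> : (t.+1 * (m * c) - (1 + t * (m * c))).+1 %/ m = c.
  have -> : (t.+1 * (m * c) - (1 + t * (m * c))).+1 = m * c by nia.
  by rewrite mulKn.
rewrite -[t * m]addn0 iotaDl -map_comp; apply: eq_map => x /=.
congr pair; nia.
Qed.

Section IntervalTree.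
Context {l : nat -> nat} {k : nat}.
Hypothesis l_gt0 : forall i, 1 <= i <= k -> 0 < l i.

Definition level_count j := \prod_(1 <= i < j.+1) l i.
Definition node_width j := \prod_(j.+1 <= i < k.+1) l i.

Lemma prod_l_gt0 a b : 1 <= a -> b <= k.+1 -> 0 < \prod_(a <= i < b) l i.
Proof.
move=> a1 bk; rewrite big_seq_cond prodn_cond_gt0 // => i /andP[+ _].
by rewrite mem_iota => i_ab; apply: l_gt0; lia.
Qed.

Lemma node_widthS j : j < k -> node_width j = l j.+1 * node_width j.+1.
Proof. by move=> jk; rewrite /node_width big_ltn. Qed.

Lemma LambdaE j : j <= k ->
  Lambda l k j = [seq (1 + t * node_width j, t.+1 * node_width j) | t <- iota 0 (level_count j)].
Proof.
elim: j => [_|j IHj jk].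
  by rewrite /level_count big_geq //= mul0n mul1n.
rewrite /= IHj ?(ltnW jk) // -map_comp node_widthS //.
have m_gt0 : 0 < l j.+1 by apply: l_gt0; lia.
have c_gt0 : 0 < node_width j.+1 by apply: prod_l_gt0.
rewrite (eq_map (fun t => split_interval_block t _ _ m_gt0 c_gt0)).
by rewrite /level_count [in RHS]big_nat_recr //= -flatten_iota_blocks map_flatten -map_comp.
Qed.

Lemma children_split j I : j < k -> I \in Lambda l k j ->
  children l k j I = split_interval I (l j.+1).
Proof.
move=> jk; rewrite LambdaE ?(ltnW jk) // => /mapP[t]; rewrite mem_iota add0n => /andP[_ t_lt] ->.
have m_gt0 : 0 < l j.+1 by apply: l_gt0; lia.
have c_gt0 : 0 < node_width j.+1 by apply: prod_l_gt0.
rewrite /children LambdaE // node_widthS // split_interval_block // filter_map.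
congr map; rewrite -(@filter_iota_window (t * l j.+1) (l j.+1) (level_count j.+1)); last first.
  by rewrite /level_count big_nat_recr //= -mulSnr leq_mul2r t_lt orbT.
apply: eq_filter => x; rewrite /preim /subint /= leq_add2l !mulnA.
by rewrite !leq_pmul2r // mulSnr.
Qed.

Lemma Lambda_children j : j < k ->
  Lambda l k j.+1 = flatten [seq children l k j K | K <- Lambda l k j].
Proof. by move=> jk; congr flatten; apply/esym/eq_in_map => K; apply: children_split. Qed.

Lemma size_children j I : j < k -> I \in Lambda l k j -> size (children l k j I) = l j.+1.
Proof. by move=> jk I_j; rewrite children_split // size_map size_iota. Qed.

Lemma big_Lambda_children {V : nmodType} j (F : nat_interval -> V) : j < k ->
  (\sum_(J <- Lambda l k j.+1) F J = \sum_(K <- Lambda l k j) \sum_(J <- children l k j K) F J)%R.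
Proof. by move=> jk; rewrite Lambda_children // big_flatten big_map. Qed.

Lemma size_Lambda_gt0 j : j <= k -> 0 < size (Lambda l k j).
Proof. by move=> jk; rewrite LambdaE // size_map size_iota prod_l_gt0. Qed.

End IntervalTree.

Lemma mem_children l k j I J : J \in children l k j I -> J \in Lambda l k j.+1.
Proof. by rewrite mem_filter => /andP[]. Qed.

Local Open Scope ring_scope.

Lemma sumr_const_count (R : pzSemiRingType) (T : Type) (r : seq T) (P : pred T) (c : R) :
  \sum_(i <- r | P i) c = c * (count P r)%:R.
Proof. by rewrite big_const_seq iter_addr_0 mulr_natr. Qed.

Section PowerMean.
Context {R : realType} {p : R}.
Hypothesis p_ge1 : 1 <= p.

Lemma powR_convex_comb (t a b : R) : 0 <= t <= 1 -> 0 <= a -> 0 <= b ->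
  (t * a + (1 - t) * b) `^ p <= t * a `^ p + (1 - t) * b `^ p.
Proof.
move=> /andP[t_ge0 t_le1] a_ge0 b_ge0.
have := convex_powR p_ge1 (Itv01 t_ge0 t_le1) (x := a) (y := b).
by rewrite !inE /= !in_itv /= !andbT !convRE; apply.
Qed.

Lemma powR_mean_le {T : eqType} {s : seq T} {F : T -> R} :
  s != [::] -> {in s, forall x, 0 <= F x} ->
  ((\sum_(x <- s) F x) / (size s)%:R) `^ p <= (\sum_(x <- s) F x `^ p) / (size s)%:R.
Proof.
elim: s => [//|x s IHs] _ F_ge0.
have [->|s_nil] := eqVneq s [::]; first by rewrite !big_seq1 !divr1.
have Fx_ge0 : 0 <= F x by apply: F_ge0; rewrite mem_head.
have Fs_ge0 : {in s, forall y, 0 <= F y} by move=> y ys; apply: F_ge0; rewrite inE ys orbT.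
set n := (size s)%:R : R.
have n_gt0 : 0 < n by rewrite ltr0n lt0n size_eq0.
set t := (n + 1)^-1.
have t_01 : 0 <= t <= 1 by rewrite invr_ge0 invf_le1; lra.
have mean_cons (G : T -> R) : (\sum_(y <- x :: s) G y) / (size (x :: s))%:R =
    t * G x + (1 - t) * ((\sum_(y <- s) G y) / n).
  by rewrite big_cons /= -natr1 -/n /t; field; lra.
have mean_ge0 : 0 <= (\sum_(y <- s) F y) / n.
  by rewrite divr_ge0 ?ler0n // big_seq sumr_ge0.
rewrite !mean_cons; apply: le_trans (powR_convex_comb _ _ _ t_01 Fx_ge0 mean_ge0) _.
by rewrite lerD2l ler_wpM2l ?subr_ge0 ?IHs //; case/andP: t_01.
Qed.

Lemma powR_sum_le {T : eqType} {s : seq T} {F : T -> R} : {in s, forall x, 0 <= F x} ->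
  (\sum_(x <- s) F x) `^ p <= (size s)%:R `^ (p - 1) * \sum_(x <- s) F x `^ p.
Proof.
move=> F_ge0; have [->|s_nil] := eqVneq s [::].
  by rewrite !big_nil powR0 ?mulr0 // gt_eqF // (lt_le_trans ltr01).
set n := (size s)%:R : R.
have n_gt0 : 0 < n by rewrite ltr0n lt0n size_eq0.
have S_ge0 : 0 <= \sum_(x <- s) F x by rewrite big_seq sumr_ge0.
have := ler_wpM2l (powR_ge0 n p) (powR_mean_le s_nil F_ge0).
rewrite -powRM ?(ltW n_gt0) ?divr_ge0 ?(ltW n_gt0) // [n * _]mulrC divfK ?gt_eqF //.
move/le_trans; apply.
by rewrite powRB ?(gt_eqF n_gt0) ?implybT // powRr1 ?(ltW n_gt0) // mulrAC -mulrA.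
Qed.

End PowerMean.

Section LevelSums.
Context {R : realType} {p : R} {l : nat -> nat} {k : nat} {f : nat -> nat_interval -> R}.
Hypothesis p_ge1 : 1 <= p.
Hypothesis l_gt0 : forall i, (1 <= i <= k)%N -> (0 < l i)%N.
Hypothesis f_ge0 : forall j I, (j <= k)%N -> I \in Lambda l k j -> 0 <= f j I.
Hypothesis f_le_children : forall j I, (j < k)%N -> I \in Lambda l k j ->
  f j I <= \sum_(J <- children l k j I) f j.+1 J.

Let p_ge0 : 0 <= p := le_trans ler01 p_ge1.

Lemma sum_powR_levelS j : (j < k)%N ->
  \sum_(I <- Lambda l k j) f j I `^ p <=
    (l j.+1)%:R `^ (p - 1) * \sum_(J <- Lambda l k j.+1) f j.+1 J `^ p.
Proof.
move=> jk; rewrite (big_Lambda_children l_gt0) // mulr_sumr.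
rewrite [leLHS]big_seq [leRHS]big_seq; apply: ler_sum => I I_j.
have f_ge0_children : {in children l k j I, forall J, 0 <= f j.+1 J}.
  by move=> J /mem_children; apply: f_ge0.
rewrite -(size_children l_gt0 _ _ jk I_j); apply: le_trans _ (powR_sum_le p_ge1 f_ge0_children).
apply: ge0_ler_powR; rewrite ?nnegrE ?f_ge0 ?f_le_children ?(ltnW jk) //.
by rewrite big_seq sumr_ge0 // => J /mem_children; apply: f_ge0.
Qed.

Lemma sum_powR_level_le a b : (a <= b <= k)%N ->
  \sum_(I <- Lambda l k a) f a I `^ p <=
    (\prod_(a.+1 <= i < b.+1) (l i)%:R `^ (p - 1)) * \sum_(I <- Lambda l k b) f b I `^ p.
Proof.
move=> /andP[ab bk]; rewrite -(subnKC ab) in bk *; elim: (b - a)%N bk => [|n IHn] bk.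
  by rewrite addn0 big_geq // mul1r.
rewrite addnS in bk *; apply: (le_trans (IHn (ltnW bk))).
rewrite [in leRHS]big_nat_recr ?ltnS ?leq_addr // -mulrA ler_wpM2l ?sum_powR_levelS //.
by rewrite prodr_ge0 // => i _; apply: powR_ge0.
Qed.

End LevelSums.

Section LevelDeficit.
Context {R : realType} {p : R} {l : nat -> nat} {k : nat}.
Context {Delta nu lambda Theta M : R} {r s : nat -> nat_interval -> R}.
Hypothesis p_ge1 : 1 <= p.
Hypothesis l_gt0 : forall i, (1 <= i <= k)%N -> (0 < l i)%N.
Hypotheses (nu_ge0 : 0 <= nu) (nu_le1 : nu <= 1) (lambda_gt0 : 0 < lambda) (M_ge0 : 0 <= M).
Hypothesis r_ge0 : forall j I, (j <= k)%N -> I \in Lambda l k j -> 0 <= r j I.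
Hypothesis s_ge0 : forall j I, (j <= k)%N -> I \in Lambda l k j -> 0 <= s j I.
Hypothesis r_le_s : forall j I, (j <= k)%N -> I \in Lambda l k j -> r j I <= lambda * s j I.
Hypothesis r_le_children : forall j I, (j < k)%N -> I \in Lambda l k j ->
  r j I <= \sum_(J <- children l k j I) r j.+1 J.
Hypothesis s_le_children : forall j I, (j < k)%N -> I \in Lambda l k j ->
  s j I <= \sum_(J <- children l k j I) s j.+1 J.
Hypothesis s_le_M : forall j I J, (j < k)%N -> I \in Lambda l k j -> J \in Lambda l k j ->
  s j I <= M * s j J.
Hypothesis Delta_le : Delta * M `^ p <= nu * Theta `^ p / (2 * lambda `^ p).

Let p_ge0 : 0 <= p := le_trans ler01 p_ge1.

Definition deficient j I := r j I `^ p <=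
  (1 - nu) * (l j.+1)%:R `^ (p - 1) * Theta `^ p * \sum_(J <- children l k j I) s j.+1 J `^ p.

Let level_sum (f : nat -> nat_interval -> R) j := \sum_(I <- Lambda l k j) f j I `^ p.

Lemma s_powR_le_level_mean j I : (j < k)%N -> I \in Lambda l k j ->
  s j I `^ p * (size (Lambda l k j))%:R <= M `^ p * level_sum s j.
Proof.
move=> jk I_j; rewrite -count_predT -sumr_const_count /level_sum mulr_sumr.
rewrite [leLHS]big_seq_cond [leRHS]big_seq_cond.
apply: ler_sum => J /andP[J_j _]; have jk' := ltnW jk.
by rewrite -powRM ?s_ge0 // ge0_ler_powR ?nnegrE ?mulr_ge0 ?s_ge0 ?s_le_M.
Qed.

Lemma sum_powR_r_count_le (P : pred nat_interval) j : (j < k)%N ->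
  \sum_(I <- Lambda l k j | P I) r j I `^ p <=
    (count P (Lambda l k j))%:R / (size (Lambda l k j))%:R * (lambda * M) `^ p * level_sum s j.
Proof.
move=> jk; have jk' := ltnW jk; set n := (size (Lambda l k j))%:R.
have n_gt0 : 0 < n by rewrite ltr0n size_Lambda_gt0.
apply: (@le_trans _ _ (\sum_(I <- Lambda l k j | P I) lambda `^ p * (M `^ p * level_sum s j / n))).
  rewrite [leLHS]big_seq_cond [leRHS]big_seq_cond; apply: ler_sum => I /andP[I_j _].
  apply: (@le_trans _ _ ((lambda * s j I) `^ p)).
    by rewrite ge0_ler_powR ?nnegrE ?mulr_ge0 ?r_ge0 ?s_ge0 ?r_le_s ?(ltW lambda_gt0).
  rewrite powRM ?s_ge0 ?(ltW lambda_gt0) // ler_wpM2l ?powR_ge0 // ler_pdivlMr //.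
  exact: s_powR_le_level_mean.
rewrite sumr_const_count powRM ?(ltW lambda_gt0) // le_eqVlt; apply/orP; left; apply/eqP.
ring.
Qed.

Lemma deficient_level_sum_r_le j : (j < k)%N ->
  (1 - Delta) * (size (Lambda l k j))%:R <= (count (deficient j) (Lambda l k j))%:R ->
  level_sum r j <= (1 - nu / 2) * Theta `^ p * (l j.+1)%:R `^ (p - 1) * level_sum s j.+1.
Proof.
move=> jk many_deficient; set m := (l j.+1)%:R `^ (p - 1).
have m_ge0 : 0 <= m := powR_ge0 _ _.
have Theta_ge0 : 0 <= Theta `^ p := powR_ge0 _ _.
have Sj1_ge0 : 0 <= level_sum s j.+1 by rewrite sumr_ge0 // => *; apply: powR_ge0.
have deficient_part : \sum_(I <- Lambda l k j | deficient j I) r j I `^ p <=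
    (1 - nu) * m * Theta `^ p * level_sum s j.+1.
  rewrite /level_sum (big_Lambda_children l_gt0) // mulr_sumr [leRHS](bigID (deficient j)) /=.
  rewrite -[leLHS]addr0; apply: lerD; first by apply: ler_sum.
  by rewrite sumr_ge0 // => I _; rewrite !mulr_ge0 ?subr_ge0 ?sumr_ge0 // => *; apply: powR_ge0.
have other_part : \sum_(I <- Lambda l k j | ~~ deficient j I) r j I `^ p <=
    nu / 2 * Theta `^ p * m * level_sum s j.+1.
  apply: le_trans (sum_powR_r_count_le (predC (deficient j)) j jk) _.
  set n := (size (Lambda l k j))%:R.
  have n_gt0 : 0 < n by rewrite ltr0n size_Lambda_gt0 ?(ltnW jk).
  have few_others : (count (predC (deficient j)) (Lambda l k j))%:R / n <= Delta.
    rewrite ler_pdivrMr //; move: many_deficient.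
    have := count_predC (deficient j) (Lambda l k j).
    move/(congr1 (fun c => c%:R : R)); rewrite natrD -/n; lra.
  have Delta_coef : Delta * (lambda * M) `^ p <= nu / 2 * Theta `^ p.
    move: Delta_le; rewrite powRM ?(ltW lambda_gt0) // ler_pdivlMr ?mulr_gt0 ?powR_gt0 //.
    lra.
  have Sj_le := sum_powR_levelS p_ge1 l_gt0 s_ge0 s_le_children j jk.
  have Sj_ge0 : 0 <= level_sum s j by rewrite sumr_ge0 // => *; apply: powR_ge0.
  apply: (@le_trans _ _ (Delta * (lambda * M) `^ p * level_sum s j)).
    by rewrite ler_wpM2r // ler_wpM2r ?powR_ge0.
  apply: (le_trans (ler_wpM2r Sj_ge0 Delta_coef)).
  by rewrite -[leRHS]mulrA ler_wpM2l ?mulr_ge0 ?divr_ge0 ?powR_ge0.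
rewrite [level_sum r j](bigID (deficient j)); apply: le_trans (lerD deficient_part other_part) _.
by rewrite le_eqVlt; apply/orP; left; apply/eqP; field.
Qed.

Lemma deficient_r_root_powR_le j : (j < k)%N ->
  (1 - Delta) * (size (Lambda l k j))%:R <= (count (deficient j) (Lambda l k j))%:R ->
  r 0%N (1%N, Ltot l k) `^ p <=
    (1 - nu / 2) * Theta `^ p * (\prod_(1 <= i < k.+1) (l i)%:R `^ (p - 1)) * level_sum s k.
Proof.
move=> jk many_deficient.
set P1 := \prod_(1 <= i < j.+1) (l i)%:R `^ (p - 1).
set m := (l j.+1)%:R `^ (p - 1).
set P2 := \prod_(j.+2 <= i < k.+1) (l i)%:R `^ (p - 1).
have P1_ge0 : 0 <= P1 by rewrite prodr_ge0 // => *; apply: powR_ge0.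
have c_ge0 : 0 <= (1 - nu / 2) * Theta `^ p * m.
  rewrite !mulr_ge0 ?powR_ge0 //; move: nu_le1; lra.
have r_root : r 0%N (1%N, Ltot l k) `^ p = level_sum r 0 by rewrite /level_sum big_seq1.
have r_0 : level_sum r 0 <= P1 * level_sum r j.
  by apply: (sum_powR_level_le p_ge1 l_gt0 r_ge0 r_le_children); rewrite (ltnW jk).
have r_j : level_sum r j <= (1 - nu / 2) * Theta `^ p * m * level_sum s j.+1.
  exact: deficient_level_sum_r_le.
have s_j1 : level_sum s j.+1 <= P2 * level_sum s k.
  by apply: (sum_powR_level_le p_ge1 l_gt0 s_ge0 s_le_children); rewrite jk leqnn.
rewrite r_root; apply: (le_trans r_0); apply: (le_trans (ler_wpM2l P1_ge0 r_j)).
apply: le_trans (ler_wpM2l P1_ge0 (ler_wpM2l c_ge0 s_j1)) _.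
have split_prod : \prod_(1 <= i < k.+1) (l i)%:R `^ (p - 1) = P1 * (m * P2).
  rewrite (big_cat_nat _ (n := j.+1)) //=; last exact: ltnW jk.
  by rewrite [X in _ * X]big_ltn.
by rewrite split_prod le_eqVlt; apply/orP; left; apply/eqP; ring.
Qed.

End LevelDeficit.

Theorem lemma3p6 (R : realType) (p : R) (d : nat) (l : nat -> nat)
  (Delta nu lambda Theta M : R) (r s : nat -> nat_interval -> R) :
  1 < p ->
  (forall i, (1 <= i <= d.+1)%N -> (0 < l i)%N) ->
  0 < Delta < 1 -> 0 < nu < 1 -> 0 < lambda -> 0 < Theta -> 1 < M ->
  (forall j I, (j <= d.+1)%N -> I \in Lambda l d.+1 j -> 0 <= r j I /\ 0 <= s j I) ->
  (* (i) *)
  (forall j I, (j <= d.+1)%N -> I \in Lambda l d.+1 j -> r j I <= lambda * s j I) ->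
  (* (ii) *)
  (forall j I, (j <= d)%N -> I \in Lambda l d.+1 j ->
     r j I <= \sum_(J <- children l d.+1 j I) r j.+1 J /\
     s j I <= \sum_(J <- children l d.+1 j I) s j.+1 J) ->
  (* (iii) max_{Lambda_j} s <= M min_{Lambda_j} s *)
  (forall j I J, (j <= d)%N -> I \in Lambda l d.+1 j -> J \in Lambda l d.+1 j ->
     s j I <= M * s j J) ->
  (* (iv) *)
  Delta * M `^ p <= nu * Theta `^ p / (2 * lambda `^ p) ->
  (* (v) *)
  (1 - nu / 2) * Theta `^ p * (\prod_(1 <= i < d.+2) (l i)%:R `^ (p - 1)) *
     (\sum_(I <- Lambda l d.+1 d.+1) s d.+1 I `^ p)
   < r 0%N (1%N, Ltot l d.+1) `^ p ->
  forall j, (j < d)%N ->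
    (size [seq I <- Lambda l d.+1 j |
             r j I `^ p <= (1 - nu) * (l j.+1)%:R `^ (p - 1) * Theta `^ p *
                            \sum_(J <- children l d.+1 j I) s j.+1 J `^ p])%:R
    < (1 - Delta) * (size (Lambda l d.+1 j))%:R.
Proof.
move=> p_gt1 l_gt0 _ /andP[nu_gt0 nu_lt1] lambda_gt0 _ M_gt1 rs_ge0 r_le_s rs_le_children.
move=> s_le_M Delta_le root_large j jd; rewrite ltNge; apply/negP; rewrite size_filter.
move=> many_deficient; move: root_large; rewrite ltNge => /negP; apply.
apply: (deficient_r_root_powR_le (ltW p_gt1) l_gt0 (ltW nu_gt0) (ltW nu_lt1) lambda_gt0
  (le_trans ler01 (ltW M_gt1)) _ _ r_le_s _ _ s_le_M Delta_le j (ltnW jd) many_deficient).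
- by move=> i I i_le I_i; case: (rs_ge0 i I i_le I_i).
- by move=> i I i_le I_i; case: (rs_ge0 i I i_le I_i).
- by move=> i I i_lt I_i; case: (rs_le_children i I i_lt I_i).
- by move=> i I i_lt I_i; case: (rs_le_children i I i_lt I_i).
Qed.
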